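(* For every DBI normal formula $\varphi$ and every pointed Kripke model $(\mathcal{M},v)$, the pointed update of $(\mathcal{M},v)$ with $(\mathcal{U}_\varphi,0)$ is defined and $\mathcal{M}\odot\mathcal{U}_\varphi,(v,0)\vDash\varphi$.
   Context: Agents $\mathcal{A}=\{1,\dots,n\}$, $n>1$; language $\mathcal{L}$: $\varphi ::= p \mid \neg\varphi \mid (\varphi\wedge\varphi)\mid B_i\varphi$, with $\top$ the usual tautology. Kripke model $\mathcal{M}=\langle S,R,V\rangle$ (nonempty $S$, $R_i\subseteq S\times S$, $V:\mathit{Prop}\to 2^S$), standard truth ($\mathcal{M},w\vDash B_i\varphi$ iff $\varphi$ holds at all $R_i$-successors). Action model $\mathcal{U}=\langle E,Q,\mathsf{pre}\rangle$ (nonempty $E$, $Q_i\subseteq E\times E$, $\mathsf{pre}:E\to\mathcal{L}$). Pointed update of $(\mathcal{M},w)$ with $(\mathcal{U},\alpha)$, defined iff $\mathcal{M},w\vDash\mathsf{pre}(\alpha)$: with $T=\{(x,\beta)\in S\times E\mid\mathcal{M},x\vDash\mathsf{pre}(\beta)\}$, $\mathcal{M}\odot\mathcal{U}=\langle S^{\mathcal U},R^{\mathcal U},V^{\mathcal U}\rangle$, where $S^{\mathcal U}$ is the smallest subset of $T$ containing $(w,\alpha)$ closed under: $(x,\beta)\in S^{\mathcal U}$, $(u,\gamma)\in T$, $xR_iu$, $\beta Q_i\gamma$ imply $(u,\gamma)\in S^{\mathcal U}$; $R^{\mathcal U}_i$ relates $(x,\beta),(u,\gamma)\in S^{\mathcal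 U}$ iff $xR_iu$ and $\beta Q_i\gamma$; $V^{\mathcal U}(p)=\{(x,\beta)\in S^{\mathcal U}\mid x\in V(p)\}$. The resulting pointed model is $(\mathcal{M}\odot\mathcal{U},(w,\alpha))$. Target agents: $\mathsf{ta}(p)=\varnothing$, $\mathsf{ta}(\neg\phi)=\mathsf{ta}(\phi)$, $\mathsf{ta}(\phi\wedge\psi)=\mathsf{ta}(\phi)\cup\mathsf{ta}(\psi)$, $\mathsf{ta}(B_i\phi)=\{i\}$. DBI formulas: $\varphi ::= B_i\xi \mid B_i(\xi\wedge\varphi)\mid(\varphi\wedge\varphi)\mid B_i\varphi$ with $\xi$ purely propositional. DBI normal: $B_i\xi$ always; $B_i\varphi$ and $B_i(\xi\wedge\varphi)$ iff $\varphi$ is DBI normal and $i\notin\mathsf{ta}(\varphi)$; $\varphi\wedge\psi$ iff both are DBI normal and $\mathsf{ta}(\varphi)\cap\mathsf{ta}(\psi)=\varnothing$. The action model $\mathcal{U}_\varphi=\langle E^\varphi,Q^\varphi,\mathsf{pre}^\varphi\rangle$ for DBI normal $\varphi$ is defined recursively; always $E^\varphi=\{0,-1\}\sqcup D^\varphi$ with $\varnothing\neq D^\varphi\subseteq\{1,2,\dots\}$, $\mathsf{pre}^\varphi(0)=\mathsf{pre}^\varphi(-1)=\top$. For a relation $Q_j$ write $\underline{Q}_j=Q_j\cap((E\setminus\{0\})\times(E\setminus\{0\}))$. (1) $\varphi=B_i\xi$, $\xi$ propositional: $D^\varphi=\{m\}$, $\mathsf{pre}(m)=\xi$, $Q_j=\{(0,-1),(m,-1),(-1,-1)\}$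 for $j\neq i$, $Q_i=\{(0,m),(m,m),(-1,-1)\}$. (2) $\varphi=B_i\psi$, $\psi$ DBI normal: with a fresh $m\geq1$, $m\notin D^\psi$, let $D^\varphi=D^\psi\sqcup\{m\}$, $\mathsf{pre}^\varphi$ extends $\mathsf{pre}^\psi$ by $\mathsf{pre}^\varphi(m)=\top$, $Q^\varphi_j=\underline{Q}^\psi_j\cup\{(0,-1)\}\cup\{(m,k)\mid(0,k)\in Q^\psi_j\}$ for $j\neq i$, and $Q^\varphi_i=\underline{Q}^\psi_i\cup\{(0,m),(m,m)\}$. (3) $\varphi=B_i(\xi\wedge\psi)$, $\xi$ propositional, $\psi$ DBI normal: as in (2) except $\mathsf{pre}^\varphi(m)=\xi$. (4) $\varphi=\psi\wedge\theta$ with $\psi,\theta$ DBI normal: rename so that $D^\psi\cap D^\theta=\varnothing$; $D^\varphi=D^\psi\sqcup D^\theta$, $\mathsf{pre}^\varphi=\mathsf{pre}^\psi\cup\mathsf{pre}^\theta$, and for every $j$: $Q^\varphi_j=\underline{Q}^\psi_j\cup\underline{Q}^\theta_j\cup\{(0,k)\mid (0,k)\in Q^\psi_j\cup Q^\theta_j,\ k\in D^\psi\sqcup D^\theta\}\cup\{(0,-1)\mid \text{there is no } k\in D^\psi\sqcup D^\theta \text{ with } (0,k)\in Q^\psi_j\cup Q^\theta_j\}$. *)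

From mathcomp Require Import all_boot.
From Stdlib Require Import ZArith List.

Unset Printing Implicit Defensive.

Section DEL.
(* agents are the n elements of 'I_n (standing for {1,...,n}) *)
Variable n : nat.
Notation agent := 'I_n.

Inductive form : Type :=
| Var of nat
| Neg of form
| And of form & form
| Bel of agent & form.

Definition top : form := Neg (And (Var 0) (Neg (Var 0))).

Record kmodel : Type := KModel {
  st : Type;
  krel : agent -> st -> st -> Prop;
  kval : nat -> st -> Prop }.

Fixpoint sat (M : kmodel) (w : st M) (phi : form) : Prop :=
  match phi with
  | Var p => kval M p w
  | Neg a => ~ sat M w a
  | And a b => sat M w a /\ sat M w b
  | Bel i a => forall u, krel M i w u -> sat M u a
  end.

(* Action models whose event set is {0,-1} ⊔ D with D a list of integers
   (for the models U_phi, D consists of positive integers). *)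
Record amodel : Type := AModel {
  evD : list Z;
  arel : agent -> Z -> Z -> Prop;
  pre : Z -> form }.

Definition inE (U : amodel) (e : Z) : Prop :=
  e = 0%Z \/ e = (-1)%Z \/ In e (evD U).

Definition upd_defined (M : kmodel) (w : st M) (U : amodel) (a : Z) : Prop :=
  inE U a /\ sat M w (pre U a).

Definition Tset (M : kmodel) (U : amodel) (p : st M * Z) : Prop :=
  inE U p.2 /\ sat M p.1 (pre U p.2).

Inductive SU (M : kmodel) (U : amodel) (w : st M) (a : Z) : st M * Z -> Prop :=
| SU_base : Tset M U (w, a) -> SU M U w a (w, a)
| SU_step i x b u c : SU M U w a (x, b) -> Tset M U (u, c) ->
    krel M i x u -> arel U i b c -> SU M U w a (u, c).

Definition upd_model (M : kmodel) (U : amodel) (w : st M) (a : Z) : kmodel :=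
  {| st := {p : st M * Z | SU M U w a p};
     krel := fun i p q => krel M i (proj1_sig p).1 (proj1_sig q).1 /\ arel U i (proj1_sig p).2 (proj1_sig q).2;
     kval := fun p s => kval M p (proj1_sig s).1 |}.

Definition upd_point (M : kmodel) (U : amodel) (w : st M) (a : Z)
  (H : upd_defined M w U a) : st (upd_model M U w a) :=
  exist _ (w, a) (SU_base M U w a H).

Fixpoint ta (phi : form) : agent -> bool :=
  match phi with
  | Var _ => fun _ => false
  | Neg a => ta a
  | And a b => fun j => ta a j || ta b j
  | Bel i _ => fun j => j == i
  end.

Fixpoint is_prop (phi : form) : bool :=
  match phi with
  | Var _ => true
  | Neg a => is_prop a
  | And a b => is_prop a && is_prop b
  | Bel _ _ => false
  end.

Inductive dbi_normal : form -> Prop :=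
| dbiN_B i xi : is_prop xi -> dbi_normal (Bel i xi)
| dbiN_BB i psi : dbi_normal psi -> ~~ ta psi i -> dbi_normal (Bel i psi)
| dbiN_BA i xi psi : is_prop xi -> dbi_normal psi -> ~~ ta psi i ->
    dbi_normal (Bel i (And xi psi))
| dbiN_And a b : dbi_normal a -> dbi_normal b ->
    (forall j, ~~ (ta a j && ta b j)) -> dbi_normal (And a b).

Definition maxD (D : list Z) : Z := fold_right Z.max 0%Z D.

Definition under (U : amodel) (j : agent) (a b : Z) : Prop :=
  arel U j a b /\ inE U a /\ inE U b /\ a <> 0%Z /\ b <> 0%Z.

(* case (1): phi = B_i xi, with m = 1 *)
Definition U1 (i : agent) (xi : form) : amodel :=
  {| evD := 1%Z :: nil;
     arel := fun j a b =>
       if j == i then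
         (a = 0%Z /\ b = 1%Z) \/ (a = 1%Z /\ b = 1%Z) \/ (a = (-1)%Z /\ b = (-1)%Z)
       else
         (a = 0%Z /\ b = (-1)%Z) \/ (a = 1%Z /\ b = (-1)%Z) \/ (a = (-1)%Z /\ b = (-1)%Z);
     pre := fun e => if Z.eqb e 1 then xi else top |}.

(* cases (2) and (3): fresh m = max D^psi + 1, pre(m) = pm
   (pm = top for case (2), pm = xi for case (3)) *)
Definition U23 (i : agent) (pm : form) (Up : amodel) : amodel :=
  let m := (maxD (evD Up) + 1)%Z in
  {| evD := m :: evD Up;
     arel := fun j a b =>
       if j == i then
         under Up i a b \/ (a = 0%Z /\ b = m) \/ (a = m /\ b = m)
       else
         under Up j a b \/ (a = 0%Z /\ b = (-1)%Z) \/ (a = m /\ arel Up j 0%Z b);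
     pre := fun e => if Z.eqb e m then pm else pre Up e |}.

Definition shiftZ (k e : Z) : Z := if Z.ltb 0 e then (e + k)%Z else e.

Definition rename (k : Z) (U : amodel) : amodel :=
  {| evD := map (shiftZ k) (evD U);
     arel := fun j a b => exists a' b', a = shiftZ k a' /\ b = shiftZ k b' /\ arel U j a' b';
     pre := fun e => if Z.ltb 0 e then pre U (e - k)%Z else pre U e |}.

(* case (4): phi = psi /\ theta; theta's positive events are shifted past those of psi *)
Definition U4 (Up Ut0 : amodel) : amodel :=
  let Ut := rename (maxD (evD Up)) Ut0 in
  let D := evD Up ++ evD Ut in
  {| evD := D;
     arel := fun j a b =>
       under Up j a b \/ under Ut j a b \/
       (a = 0%Z /\ (arel Up j 0%Z b \/ arel Ut j 0%Z b) /\ In b D) \/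
       (a = 0%Z /\ b = (-1)%Z /\
          ~ (exists k, In k D /\ (arel Up j 0%Z k \/ arel Ut j 0%Z k)));
     pre := fun e => if existsb (Z.eqb e) (evD Up) then pre Up e else pre Ut e |}.

(* junk value for formulas outside the DBI fragment *)
Definition Ujunk : amodel :=
  {| evD := 1%Z :: nil; arel := fun _ _ _ => False; pre := fun _ => top |}.

Fixpoint Uphi (phi : form) : amodel :=
  match phi with
  | Bel i chi =>
      if is_prop chi then U1 i chi
      else match chi with
           | And xi psi => if is_prop xi then U23 i xi (Uphi psi) else U23 i top (Uphi chi)
           | _ => U23 i top (Uphi chi)
           end
  | And a b => U4 (Uphi a) (Uphi b)
  | _ => Ujunk
  end.

End DEL.

Arguments st {n}.
Arguments krel {n}.
Arguments kval {n}.
Arguments sat {n}.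
Arguments evD {n}.
Arguments arel {n}.
Arguments pre {n}.
Arguments inE {n}.
Arguments upd_defined {n}.
Arguments upd_model {n}.
Arguments upd_point {n M U w a}.
Arguments ta {n}.
Arguments is_prop {n}.
Arguments dbi_normal {n}.
Arguments Uphi {n}.
Arguments top {n}.

(* Since successors in the generated update are exactly the pairs allowed by
   [Tset], satisfaction at a point (x, e) of M ⊙ U can be evaluated directly on the
   pair ([usat]).  By induction on the DBI normal formula φ, U_φ satisfies
   φ at event 0 in every model, together with a few structural invariants
   ([standard]): its events in D are positive, 0 and -1 carry ⊤, -1 is a
   reflexive sink, and from 0 the target agents of φ move into D while all
   other agents move to -1.  In the inductive steps U_ψ (and U_θ, shifted) sits
   inside the new action model, and every move of the new model out of an old
   event is answered by a move of the old model with the same precondition;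
   along such a back simulation, formulas negating only propositional
   formulas transfer from the old model to the new one.  At the root only the
   target agents of ψ must be answered, which is exactly what the side
   conditions i ∉ ta(ψ) and ta(ψ) ∩ ta(θ) = ∅ of DBI normality provide. *)

From mathcomp Require Import all_boot.
From Stdlib Require Import ZArith List Lia.

Section UpdateSemantics.

Variable n : nat.
Implicit Types (j : 'I_n) (M : kmodel n) (U : amodel n) (phi : form n).

Fixpoint usat M U (x : st M) (e : Z) phi : Prop :=
  match phi with
  | Var p => kval M p x
  | Neg a => ~ usat M U x e a
  | And a b => usat M U x e a /\ usat M U x e b
  | Bel j a => forall u c, krel M j x u -> arel U j e c -> Tset n M U (u, c) -> usat M U u c a
  end.

Lemma SU_Tset M U w a p : SU n M U w a p -> Tset n M U p.
Proof. by case. Qed.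

Lemma sat_upd_model M U w a0 phi (p : st (upd_model M U w a0)) :
  sat _ p phi <-> usat M U (sval p).1 (sval p).2 phi.
Proof.
elim: phi p => [q|a IH|a IHa b IHb|j a IH] [[x e] Hp] //=.
- by rewrite (IH (exist _ (x, e) Hp)).
- by rewrite (IHa (exist _ (x, e) Hp)) (IHb (exist _ (x, e) Hp)).
- split=> [H u c Hxu Hec Huc | H [[u c] Huc] /= [Hxu Hec]].
  + have Hq : SU n M U w a0 (u, c) by exact: SU_step Hp Huc Hxu Hec.
    by apply/(IH (exist _ (u, c) Hq))/H.
  + by apply/(IH (exist _ (u, c) Huc))/H => //; apply: SU_Tset Huc.
Qed.

Lemma usat_prop M U x e phi : is_prop phi -> usat M U x e phi <-> sat M x phi.
Proof.
elim: phi => [q|a IH|a IHa b IHb|j a IH] //= Hp.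
- by rewrite IH.
- by case/andP: Hp => /IHa -> /IHb ->.
Qed.

Lemma sat_top M x : sat M x top.
Proof. by move=> /= []. Qed.

Fixpoint positive phi : bool :=
  match phi with
  | Var _ => true
  | Neg a => is_prop a
  | And a b => positive a && positive b
  | Bel _ a => positive a
  end.

Lemma prop_positive phi : is_prop phi -> positive phi.
Proof. by elim: phi => //= a IHa b IHb /andP[/IHa -> /IHb ->]. Qed.

Lemma dbi_normal_positive phi : dbi_normal phi -> positive phi.
Proof.
elim=> [i xi /prop_positive | i psi _ IH _ | i xi psi /prop_positive Hxi _ IH _
       | a b _ IHa _ IHb _] //=; exact/andP.
Qed.

Definition back_match (f : Z -> Z) U U' j e c' : Prop :=
  exists2 c, arel U j e c & [/\ c' = f c, inE U c, c <> 0%Z & pre U' c' = pre U c].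

Definition back_step (f : Z -> Z) U U' j e e' : Prop :=
  forall c', arel U' j e' c' -> back_match f U U' j e c'.

Definition back_simulation (f : Z -> Z) U U' : Prop :=
  forall j e, inE U e -> e <> 0%Z -> back_step f U U' j e (f e).

Section BackTransfer.
Context {M : kmodel n} {f : Z -> Z} {U U' : amodel n}.

Lemma usat_Bel_back i a e e' (x : st M) :
  (forall (u : st M) c, inE U c -> c <> 0%Z -> usat M U u c a -> usat M U' u (f c) a) ->
  back_step f U U' i e e' -> usat M U x e (Bel n i a) -> usat M U' x e' (Bel n i a).
Proof.
move=> IH back H u c' Hxu /back[c Hec [-> Hc Hc0 Hpre]] [_ /= Hu].
by apply: IH => //; apply: H => //; split; rewrite //= -Hpre.
Qed.

Hypothesis simU : back_simulation f U U'.

Lemma usat_back phi (x : st M) e : positive phi -> inE U e -> e <> 0%Z ->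
  usat M U x e phi -> usat M U' x (f e) phi.
Proof.
elim: phi x e => [q|a _|a IHa b IHb|j a IH] x e Hpos He He0 //.
- by rewrite /= !(usat_prop _ _ _ _ _ Hpos).
- by case/andP: Hpos => Ha Hb [HA HB]; split; [apply: IHa | apply: IHb].
- exact: usat_Bel_back (fun u c => IH u c Hpos) (simU j e He He0).
Qed.

Lemma usat_back_root {phi e'} {x : st M} : dbi_normal phi ->
  (forall j, ta phi j -> back_step f U U' j 0%Z e') ->
  usat M U x 0%Z phi -> usat M U' x e' phi.
Proof.
move=> Hphi; elim: Hphi x => [i xi Hxi | i psi Hpsi _ _ | i xi psi Hxi Hpsi _ _
                              | a b _ IHa _ IHb _] x Hroot.
- apply: usat_Bel_back (Hroot i (eqxx i)) => u c; apply: usat_back.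
  exact: prop_positive.
- apply: usat_Bel_back (Hroot i (eqxx i)) => u c; apply: usat_back.
  exact: dbi_normal_positive.
- apply: usat_Bel_back (Hroot i (eqxx i)) => u c; apply: usat_back.
  by rewrite /= prop_positive ?dbi_normal_positive.
- case=> [Ha Hb]; split; [apply: IHa Ha | apply: IHb Hb] => j Hj; apply: Hroot.
  + by rewrite /= Hj.
  + by rewrite /= Hj orbT.
Qed.

End BackTransfer.

Record standard U (T : 'I_n -> bool) : Prop := {
  evD_gt0 : forall e, In e (evD U) -> (0 < e)%Z;
  pre0 : pre U 0%Z = top;
  preN1 : pre U (-1)%Z = top;
  arelN1 : forall j c, arel U j (-1)%Z c -> c = (-1)%Z;
  arelN1N1 : forall j, arel U j (-1)%Z (-1)%Z;
  arel0_off : forall j, ~~ T j -> forall c, arel U j 0%Z c -> c = (-1)%Z;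
  arel0_on : forall j, T j -> forall c, arel U j 0%Z c -> In c (evD U);
  arel0_on_ex : forall j, T j -> exists2 c, In c (evD U) & arel U j 0%Z c }.

Lemma U1_standard i xi : standard (U1 n i xi) (fun j => j == i).
Proof.
split=> //=.
- by move=> e [<-|[]].
- by move=> j c; case: (j == i); lia.
- by move=> j; case: (j == i); lia.
- by move=> j /negbTE-> c; lia.
- by move=> j -> c; lia.
- by move=> j ->; exists 1%Z; [left | lia].
Qed.

Lemma usat_U1 M (x : st M) i xi : is_prop xi -> usat M (U1 n i xi) x 0%Z (Bel n i xi).
Proof.
move=> Hxi u c _ /=; rewrite eqxx => Hc [_ /=].
have -> : c = 1%Z by lia.
by move=> Hu; apply/usat_prop.
Qed.

Lemma maxD_ge0 D : (0 <= maxD D)%Z.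
Proof. elim: D => [|d D IH] /=; lia. Qed.

Lemma maxD_ge {D e} : In e D -> (e <= maxD D)%Z.
Proof. by elim: D => [|d D IH] //= [->|/IH]; have := maxD_ge0 D; lia. Qed.

Lemma inE_le_maxD U e (He : inE U e) : (e <= maxD (evD U))%Z.
Proof. by have := maxD_ge0 (evD U); case: He => [->|[->|/maxD_ge]]; lia. Qed.

Lemma shiftZ_gt0 k e : (0 < e)%Z -> shiftZ k e = (e + k)%Z.
Proof. by rewrite /shiftZ => /Z.ltb_lt ->. Qed.

Lemma shiftZ_le0 k e : (e <= 0)%Z -> shiftZ k e = e.
Proof. by rewrite /shiftZ => /Z.ltb_ge ->. Qed.

Lemma shiftZ_inj {k} : (0 <= k)%Z -> injective (shiftZ k).
Proof. by rewrite /shiftZ => ? a b; do 2!case: Z.ltb_spec; lia. Qed.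

Lemma existsb_Zeqb c D : existsb (Z.eqb c) D = true <-> In c D.
Proof.
rewrite existsb_exists; split=> [[x [Hx /Z.eqb_eq ->]] // | Hc].
by exists c; rewrite Z.eqb_refl.
Qed.

Lemma under_back_match U U' j e c :
  (forall c, inE U c -> pre U' c = pre U c) -> under n U j e c ->
  back_match id U U' j e c.
Proof. by move=> Hpre [Hec [_ [Hc [_ Hc0]]]]; exists c => //; split; rewrite ?Hpre. Qed.

Lemma under_N1N1 U T j : standard U T -> under n U j (-1)%Z (-1)%Z.
Proof. by case=> _ _ _ _ aN1N1 _ _ _; do !split=> //; [right; left | right; left]. Qed.

Lemma back_match_N1 f U U' T j : standard U T -> f (-1)%Z = (-1)%Z ->
  pre U' (-1)%Z = pre U (-1)%Z -> back_match f U U' j (-1)%Z (-1)%Z.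
Proof.
case=> _ _ _ _ aN1N1 _ _ _ Hf Hpre; exists (-1)%Z => //.
by split=> //; right; left.
Qed.

Section Box.
Variables (i : 'I_n) (pm : form n) (Up : amodel n).
Let m := (maxD (evD Up) + 1)%Z.
Let U := U23 n i pm Up.

Lemma inE_lt_fresh {e} : inE Up e -> (e < m)%Z.
Proof. by move/inE_le_maxD; rewrite /m; lia. Qed.

Lemma fresh_gt0 : (0 < m)%Z.
Proof. by have := maxD_ge0 (evD Up); rewrite /m; lia. Qed.

Lemma pre_U23 c : c <> m -> pre U c = pre Up c.
Proof. by rewrite /= -/m => /Z.eqb_neq ->. Qed.

Lemma arel_U23_root c : arel U i 0%Z c -> c = m.
Proof.
have m_gt0 := fresh_gt0; rewrite /= -/m eqxx.
by case=> [[_ [_ [_ []]]] | [[_ ->] | [Hm _]]] //; lia.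
Qed.

Lemma U23_standard T : standard Up T -> standard U (fun j => j == i).
Proof.
move=> HUp; case: (HUp) => gt0 p0 pN1 aN1 _ _ _ _; have m_gt0 := fresh_gt0.
split=> [e /= [<- | /gt0] | | | j c | j | j /negbTE ji c | j ji c | j ji] //.
- by rewrite pre_U23 //; lia.
- by rewrite pre_U23 //; lia.
- rewrite /= -/m; case: (j == i) => [[[/aN1]|]|[[/aN1]|]] //; lia.
- by rewrite /=; case: (j == i); left; apply: under_N1N1 HUp.
- by rewrite /= -/m ji; case=> [[_ [_ [_ []]]]|]; lia.
- by rewrite /= -/m ji; case=> [[_ [_ [_ []]]]|[[_ ->]|]] //; [left | lia].
- by exists m; rewrite /= ?ji; [left | right; left].
Qed.

Lemma U23_back : back_simulation id Up U.
Proof.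
move=> j e He He0 c; have Hem := inE_lt_fresh He.
rewrite /= -/m; case: eqP => [->|_] [Hu|]; try lia;
  by apply: under_back_match Hu => c' /inE_lt_fresh Hc'; rewrite pre_U23 //; lia.
Qed.

Lemma U23_back_root T j : standard Up T -> ~~ T i -> T j -> back_step id Up U j 0%Z m.
Proof.
move=> [gt0 _ _ _ _ _ on _] Hi Hj c.
have ji : (j == i) = false by apply: contraNF Hi => /eqP <-.
have m_gt0 := fresh_gt0.
rewrite /= -/m ji; case=> [[_ [/inE_lt_fresh]]|[|[_ Hc]]]; try lia.
have HcD := on j Hj c Hc; have c_gt0 := gt0 c HcD.
exists c => //; split=> //; [by right; right | lia | ].
by rewrite pre_U23 //; have := inE_lt_fresh (or_intror (or_intror HcD)); lia.
Qed.

Lemma usat_U23_fresh psi M (u : st M) : standard Up (ta psi) -> dbi_normal psi ->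
  ~~ ta psi i -> (forall x : st M, usat M Up x 0%Z psi) -> usat M U u m psi.
Proof.
move=> HUp Hpsi Hi Hsat; apply: (usat_back_root U23_back Hpsi _ (Hsat u)) => j.
exact: U23_back_root HUp Hi.
Qed.

End Box.

Section Conj.
Context {Up Ut0 : amodel n} {Tp Tt : 'I_n -> bool}.
Hypotheses (HUp : standard Up Tp) (HUt : standard Ut0 Tt).
Let k := maxD (evD Up).
Let Ut := rename n k Ut0.
Let U := U4 n Up Ut0.

Let k_ge0 : (0 <= k)%Z := maxD_ge0 (evD Up).

Lemma In_Up_bounds {e} : In e (evD Up) -> (0 < e <= k)%Z.
Proof. by case: HUp => gt0 _ _ _ _ _ _ _ He; have := gt0 e He; have := maxD_ge He; lia. Qed.

Lemma inE_rename {c} : inE Ut c -> exists2 b, c = shiftZ k b & inE Ut0 b.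
Proof.
case=> [->|[->|/in_map_iff[b [<- Hb]]]]; [exists 0%Z | exists (-1)%Z | exists b] => //.
- by left.
- by right; left.
- by right; right.
Qed.

Lemma shiftZ_notin_Up {b} : inE Ut0 b -> ~ In (shiftZ k b) (evD Up).
Proof.
case: HUt => gt0 _ _ _ _ _ _ _.
case=> [->|[->|/gt0 Hb]] /In_Up_bounds.
- by rewrite shiftZ_le0; lia.
- by rewrite shiftZ_le0; lia.
- by rewrite shiftZ_gt0; lia.
Qed.

Lemma pre_rename_shiftZ b : pre Ut (shiftZ k b) = pre Ut0 b.
Proof.
rewrite /= /shiftZ; case: (Z.ltb_spec 0 b) => Hb; last by rewrite (proj2 (Z.ltb_ge _ _) Hb).
by rewrite (proj2 (Z.ltb_lt _ _)) ?Z.add_simpl_r //; lia.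
Qed.

Lemma pre_U4_in {c} : In c (evD Up) -> pre U c = pre Up c.
Proof. by move=> /existsb_Zeqb Hc /=; rewrite Hc. Qed.

Lemma pre_U4_out {c} : ~ In c (evD Up) -> pre U c = pre Ut c.
Proof. by rewrite -existsb_Zeqb /= => /Bool.not_true_is_false ->. Qed.

Lemma pre_U4_Ut {b} : inE Ut0 b -> pre U (shiftZ k b) = pre Ut0 b.
Proof. by move=> /shiftZ_notin_Up /pre_U4_out ->; apply: pre_rename_shiftZ. Qed.

Lemma pre_U4_Up {c} : inE Up c -> pre U c = pre Up c.
Proof.
have [_ p0 pN1 _ _ _ _ _] := HUp; have [_ q0 qN1 _ _ _ _ _] := HUt.
case=> [->|[->|/pre_U4_in //]].
- by rewrite -{1}(shiftZ_le0 k 0) // pre_U4_Ut ?q0 //; left.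
- by rewrite -{1}(shiftZ_le0 k (-1)) // pre_U4_Ut ?qN1 //; right; left.
Qed.

Lemma arel_rename {j a c} :
  arel Ut j (shiftZ k a) c -> exists2 b, c = shiftZ k b & arel Ut0 j a b.
Proof. by case=> a' [b [/(shiftZ_inj k_ge0) <- [-> Hab]]]; exists b. Qed.

Lemma shiftZ_inE_Up {b} :
  inE Up (shiftZ k b) -> inE Ut0 b -> b <> 0%Z -> b = (-1)%Z.
Proof.
move=> HbUp Hb Hb0; case: HbUp => [|[|/(shiftZ_notin_Up Hb)]] //;
  rewrite /shiftZ; case: Z.ltb_spec; lia.
Qed.

Lemma evD_U4_gt0 {e} : In e (evD U) -> (0 < e)%Z.
Proof.
case: HUt => gt0 _ _ _ _ _ _ _.
move=> /(in_app_or _ _ e) [/In_Up_bounds | /in_map_iff [b [<- /gt0 Hb]]]; first lia.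
by rewrite shiftZ_gt0; lia.
Qed.

Lemma U4_witness {j} : Tp j || Tt j ->
  exists c, In c (evD U) /\ (arel Up j 0%Z c \/ arel Ut j 0%Z c).
Proof.
case: HUp HUt => [_ _ _ _ _ _ _ exp] [_ _ _ _ _ _ _ ext].
case/orP=> [/exp [c Hc Hjc] | /ext [c Hc Hjc]].
- by exists c; split; [apply: in_or_app; left | left].
- exists (shiftZ k c); split; first by apply/in_or_app; right; apply: in_map.
  by right; exists 0%Z, c; rewrite shiftZ_le0.
Qed.

Lemma U4_standard : standard U (fun j => Tp j || Tt j).
Proof.
have [_ p0 pN1 aN1p _ offp _ _] := HUp; have [_ _ _ aN1t _ offt _ _] := HUt.
split=> [e /evD_U4_gt0 | | | j c | j | j | j Hj c | j Hj] //.
- by rewrite pre_U4_Up //; left.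
- by rewrite pre_U4_Up //; right; left.
- case=> [[/aN1p] | [[] | [[H0 _] | [H0 _]]]] //; rewrite -{1}(shiftZ_le0 k (-1)) //.
  by case/arel_rename=> b -> /aN1t ->; rewrite shiftZ_le0.
- by left; apply: under_N1N1 HUp.
- rewrite negb_or => /andP[Hjp Hjt] c.
  case=> [[_ [_ [_ []]]] | [[_ [_ [_ []]]] | [[_ [[/(offp _ Hjp) | Hjc] _]] | [_ [-> _]]]]] //.
  move: Hjc; rewrite -{1}(shiftZ_le0 k 0) // => /arel_rename [b -> /(offt _ Hjt) ->].
  by rewrite shiftZ_le0.
- case=> [[_ [_ [_ []]]] | [[_ [_ [_ []]]] | [[_ [_ HIn]] | [_ [_ []]]]]] //.
  exact: U4_witness Hj.
- have [c [Hc Hjc]] := U4_witness Hj.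
  by exists c => //; right; right; left.
Qed.

Lemma U4_back_Up : back_simulation id Up U.
Proof.
have [_ _ _ aN1t _ _ _ _] := HUt.
move=> j e He He0 c'; case=> [Hu | [[Hjc [HeUt _]] | [[/He0 //] | [/He0 //]]]].
  by apply: under_back_match Hu => c; apply: pre_U4_Up.
have [b Heb Hb] := inE_rename HeUt.
have Hb0 : b <> 0%Z by move=> Hb0; apply: He0; rewrite Heb Hb0 shiftZ_le0.
have Hb1 : b = (-1)%Z by apply: shiftZ_inE_Up Hb Hb0; rewrite -Heb.
move: Hjc; rewrite /= Heb Hb1 => /arel_rename [b' -> /aN1t ->].
rewrite shiftZ_le0 //; apply: back_match_N1 HUp _ _ => //.
by rewrite pre_U4_Up //; right; left.
Qed.

Lemma U4_back_Ut : back_simulation (shiftZ k) Ut0 U.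
Proof.
have [_ _ _ aN1p _ _ _ _] := HUp.
move=> j e He He0 c'; case=> [[Hjc [HeUp _]] | [[Hjc [_ [Hc' [_ Hc'0]]]] | [[Hs _] | [Hs _]]]].
- have He1 := shiftZ_inE_Up HeUp He He0; move: Hjc; rewrite He1 shiftZ_le0 // => /aN1p ->.
  apply: back_match_N1 HUt _ _; first by rewrite shiftZ_le0.
  by rewrite -{1}(shiftZ_le0 k (-1)) // pre_U4_Ut //; right; left.
- case/arel_rename: Hjc => b Hc'b Hjb; have [b' Hbb' Hb'] := inE_rename Hc'.
  move: Hbb'; rewrite Hc'b => /(shiftZ_inj k_ge0) Hbb'; subst c' b'.
  exists b => //; split=> //; first by move=> Hb0; apply: Hc'0; rewrite Hb0 shiftZ_le0.
  exact: pre_U4_Ut.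
- by move: Hs; rewrite /shiftZ; case: Z.ltb_spec; lia.
- by move: Hs; rewrite /shiftZ; case: Z.ltb_spec; lia.
Qed.

Lemma U4_back_root_Up j : Tp j -> ~~ Tt j -> back_step id Up U j 0%Z 0%Z.
Proof.
have [gt0 _ _ _ _ _ onp _] := HUp; have [_ _ _ _ _ offt _ _] := HUt.
move=> Hjp Hjt c'.
case=> [[_ [_ [_ []]]] | [[_ [_ [_ []]]] | [[_ [[Hjc | Hjc] HIn]] | [_ [_ []]]]]] //.
- have Hc' := onp j Hjp c' Hjc; exists c' => //; split=> //; last exact: pre_U4_in.
  + by right; right.
  + by have := gt0 c' Hc'; lia.
- move: Hjc; rewrite -{1}(shiftZ_le0 k 0) // => /arel_rename [b Hc' /(offt _ Hjt) Hb].
  by move: HIn; rewrite Hc' Hb shiftZ_le0 // => /evD_U4_gt0.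
- by apply: U4_witness; rewrite Hjp.
Qed.

Lemma U4_back_root_Ut j : Tt j -> ~~ Tp j -> back_step (shiftZ k) Ut0 U j 0%Z 0%Z.
Proof.
have [_ _ _ _ _ offp _ _] := HUp; have [gt0 _ _ _ _ _ ont _] := HUt.
move=> Hjt Hjp c'.
case=> [[_ [_ [_ []]]] | [[_ [_ [_ []]]] | [[_ [[Hjc | Hjc] HIn]] | [_ [_ []]]]]] //.
- by move: HIn; rewrite (offp _ Hjp _ Hjc) => /evD_U4_gt0.
- move: Hjc; rewrite -{1}(shiftZ_le0 k 0) // => /arel_rename [b -> Hjb].
  have Hb := ont j Hjt b Hjb; have HbE : inE Ut0 b by right; right.
  exists b => //; split=> //; last exact: pre_U4_Ut.
  by have := gt0 b Hb; lia.
- by apply: U4_witness; rewrite Hjt orbT.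
Qed.

End Conj.

Lemma dbi_normal_not_prop phi : dbi_normal phi -> is_prop phi = false.
Proof. by elim=> //= a b _ ->. Qed.

Lemma Uphi_Bel i psi : dbi_normal psi -> Uphi (Bel n i psi) = U23 n i top (Uphi psi).
Proof.
move=> Hpsi; rewrite /= dbi_normal_not_prop //.
by case: Hpsi => //= a b Ha _ _; rewrite dbi_normal_not_prop.
Qed.

Lemma Uphi_Bel_And i xi psi : is_prop xi -> dbi_normal psi ->
  Uphi (Bel n i (And n xi psi)) = U23 n i xi (Uphi psi).
Proof. by move=> /= Hxi /dbi_normal_not_prop Hpsi; rewrite Hxi Hpsi. Qed.

Lemma Uphi_spec phi : dbi_normal phi ->
  standard (Uphi phi) (ta phi) /\ forall M (x : st M), usat M (Uphi phi) x 0%Z phi.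
Proof.
elim=> [i xi Hxi | i psi Hpsi [HU IH] Hi | i xi psi Hxi Hpsi [HU IH] Hi
       | a b Ha [HUa IHa] Hb [HUb IHb] Hab].
- rewrite /= Hxi; split; first exact: U1_standard.
  by move=> M x; apply: usat_U1.
- rewrite Uphi_Bel //; split; first exact: U23_standard HU.
  move=> M x u c _ /arel_U23_root -> _.
  exact: usat_U23_fresh HU Hpsi Hi (IH M).
- rewrite Uphi_Bel_And //; split; first exact: U23_standard HU.
  move=> M x u c _ /arel_U23_root -> [_ Hu]; split.
  + by apply/usat_prop => //; move: Hu; rewrite /= Z.eqb_refl.
  + exact: usat_U23_fresh HU Hpsi Hi (IH M).
- split; first exact: U4_standard.
  move=> M x; split.
  + apply: (usat_back_root (U4_back_Up HUa HUb) Ha _ (IHa M x)) => j Hj.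
    by apply: (U4_back_root_Up HUa HUb) => //; have := Hab j; rewrite Hj.
  + apply: (usat_back_root (U4_back_Ut HUa HUb) Hb _ (IHb M x)) => j Hj.
    by apply: (U4_back_root_Ut HUa HUb) => //; have := Hab j; rewrite Hj andbT.
Qed.

End UpdateSemantics.

Theorem theorem4 (n : nat) (Hn : 1 < n) (phi : form n) (M : kmodel n) (v : st M) :
  dbi_normal phi ->
  exists H : upd_defined M v (Uphi phi) 0%Z,
    sat (upd_model M (Uphi phi) v 0%Z) (upd_point H) phi.
Proof.
move=> /Uphi_spec [[_ pre0 _ _ _ _ _ _] Hsat].
have H : upd_defined M v (Uphi phi) 0%Z by split; [left | rewrite pre0; apply: sat_top].
by exists H; apply/sat_upd_model/Hsat.
Qed.
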